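(* For every triangle $ABC$ with $b=c>a$, we have $AX_2<AX_{15}<AX_{17}$; that is, in the isosceles order, $X_2\prec X_{15}\prec X_{17}$.
   Context: $X_n$ denotes the $n$-th triangle center listed in Kimberling's Encyclopedia of Triangle Centers (ETC), given by barycentric coordinates in terms of $a=BC$, $b=CA$, $c=AB$. The isosceles order: $P\prec Q$ if $P$ is closer to $A$ than $Q$ in every isosceles triangle $ABC$ with $b=c>a$. *)

From Stdlib Require Import Reals.
Open Scope R_scope.

Definition point := (R * R)%type.

Definition edist (P Q : point) : R :=
  sqrt ((fst P - fst Q) ^ 2 + (snd P - snd Q) ^ 2).

Definition noncollinear (A B C : point) : Prop :=
  (fst B - fst A) * (snd C - snd A) - (snd B - snd A) * (fst C - fst A) <> 0.

(* Point with (unnormalized) barycentric coordinates u : v : w w.r.t. ABC. *)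
Definition bary (A B C : point) (u v w : R) : point :=
  ((u * fst A + v * fst B + w * fst C) / (u + v + w),
   (u * snd A + v * snd B + w * snd C) / (u + v + w)).

(* Conway notation in terms of the side lengths a = BC, b = CA, c = AB:
   S = twice the area (Heron), S_A = (b^2+c^2-a^2)/2, etc. *)
Definition ConwayS (a b c : R) : R :=
  sqrt ((a + b + c) * (- a + b + c) * (a - b + c) * (a + b - c)) / 2.
Definition ConwaySA (a b c : R) : R := (b ^ 2 + c ^ 2 - a ^ 2) / 2.

Definition X2 (A B C : point) : point := bary A B C 1 1 1.

(* X(15), 1st isodynamic point: trilinears sin(A + pi/3),
   barycentrics a^2 (sqrt3 S_A + S) : ... *)
Definition X15 (A B C : point) : point :=
  let a := edist B C in let b := edist C A in let c := edist A B in
  let S := ConwayS a b c in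
  bary A B C (a ^ 2 * (sqrt 3 * ConwaySA a b c + S))
             (b ^ 2 * (sqrt 3 * ConwaySA b c a + S))
             (c ^ 2 * (sqrt 3 * ConwaySA c a b + S)).

(* X(17), 1st Napoleon point: trilinears csc(A + pi/6),
   barycentrics 1/(S_A + sqrt3 S) : ... *)
Definition X17 (A B C : point) : point :=
  let a := edist B C in let b := edist C A in let c := edist A B in
  let S := ConwayS a b c in
  bary A B C (/ (ConwaySA a b c + sqrt 3 * S))
             (/ (ConwaySA b c a + sqrt 3 * S))
             (/ (ConwaySA c a b + sqrt 3 * S)).

(* In an isosceles triangle with apex A, the centers X2, X15 and X17 all have
   barycentrics of the form u : v : v, so they lie on the median AM with
   AP = 2v/(u + 2v) AM, and comparing such distances amounts to comparing cross
   products of weights.  In Conway symbols x = S_A, y = S_B = S_C, where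
   a^2 = 2y, b^2 = x + y and S^2 = y(2x + y), the hypothesis b > a becomes x > y
   and the two comparisons become (x - y)(S - sqrt3 y) > 0 and 4yS(x - y) > 0. *)
From Stdlib Require Import Reals Lra Psatz.
Open Scope R_scope.
Set Implicit Arguments.

Lemma edist_pos (P Q : point) : P <> Q -> 0 < edist P Q.
Proof.
  destruct P as [px py], Q as [qx qy]; intros Hne; unfold edist; cbn [fst snd].
  apply sqrt_lt_R0.
  pose proof (pow2_ge_0 (px - qx)); pose proof (pow2_ge_0 (py - qy)).
  destruct (Req_dec (px - qx) 0) as [Ex | Ex];
    [destruct (Req_dec (py - qy) 0) as [Ey | Ey] |].
  - exfalso; apply Hne; f_equal; lra.
  - pose proof (Rlt_0_sqr _ Ey); unfold Rsqr in *; nra.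
  - pose proof (Rlt_0_sqr _ Ex); unfold Rsqr in *; nra.
Qed.

Lemma noncollinear_B_neq_C (A B C : point) : noncollinear A B C -> B <> C.
Proof. intros Hnc E; apply Hnc; subst; ring. Qed.

Lemma noncollinear_A_neq_midpoint (A B C : point) :
  noncollinear A B C -> A <> bary A B C 0 1 1.
Proof.
  destruct A as [ax ay], B as [bx by0], C as [cx cy].
  unfold noncollinear, bary; simpl; intros Hnc E; injection E as Ex Ey.
  replace (0 + 1 + 1) with 2 in Ex, Ey by ring.
  apply Hnc.
  replace cx with (2 * ax - bx) by lra; replace cy with (2 * ay - by0) by lra.
  ring.
Qed.

Lemma edist_apex_bary (A B C : point) (u v : R) : u + 2 * v <> 0 ->
  edist A (bary A B C u v v) =
  Rabs (2 * v / (u + 2 * v)) * edist A (bary A B C 0 1 1).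
Proof.
  destruct A as [ax ay], B as [bx by0], C as [cx cy]; intros Hn.
  unfold edist, bary; simpl.
  rewrite <- sqrt_Rsqr_abs, <- sqrt_mult_alt by (unfold Rsqr; nra).
  f_equal; unfold Rsqr.
  field; lra.
Qed.

Lemma edist_apex_bary_lt (A B C : point) (u v u' v' : R) :
  noncollinear A B C -> 0 < u -> 0 < v -> 0 < u' -> 0 < v' ->
  u' * v < u * v' ->
  edist A (bary A B C u v v) < edist A (bary A B C u' v' v').
Proof.
  intros Hnc Hu Hv Hu' Hv' Hcross.
  pose proof (edist_pos (noncollinear_A_neq_midpoint Hnc)) as HM.
  rewrite (@edist_apex_bary A B C u v), (@edist_apex_bary A B C u' v') by lra.
  rewrite !Rabs_pos_eq by (apply Rlt_le, Rdiv_lt_0_compat; lra).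
  apply Rmult_lt_compat_r; [exact HM |].
  apply Rlt_0_minus.
  replace (2 * v' / (u' + 2 * v') - 2 * v / (u + 2 * v))
    with (2 * (u * v' - u' * v) / ((u + 2 * v) * (u' + 2 * v'))) by (field; lra).
  apply Rdiv_lt_0_compat; [lra | apply Rmult_lt_0_compat; lra].
Qed.

Lemma ConwaySA_swap (a b c : R) : ConwaySA a b c = ConwaySA a c b.
Proof. unfold ConwaySA; field. Qed.

Lemma ConwayS_sq (a b c : R) :
  0 <= (a + b + c) * (- a + b + c) * (a - b + c) * (a + b - c) ->
  ConwayS a b c ^ 2 =
  ConwaySA a b c * ConwaySA b c a + ConwaySA b c a * ConwaySA c a b
  + ConwaySA c a b * ConwaySA a b c.
Proof.
  intros Hheron; unfold ConwayS.
  unfold Rdiv; rewrite Rpow_mult_distr, pow2_sqrt by exact Hheron.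
  unfold ConwaySA; field.
Qed.

Lemma isosceles_conway_symbols (a b : R) : 0 < a -> a < b ->
  0 < ConwaySA b b a /\ ConwaySA b b a < ConwaySA a b b /\
  0 < ConwayS a b b /\
  ConwayS a b b ^ 2 = ConwaySA b b a * (2 * ConwaySA a b b + ConwaySA b b a).
Proof.
  intros Ha Hab.
  assert (Hheron : 0 < (a + b + b) * (- a + b + b) * (a - b + b) * (a + b - b)).
  { replace (_ * _) with (a ^ 2 * ((a + 2 * b) * (2 * b - a))) by ring.
    apply Rmult_lt_0_compat; [apply pow_lt |]; nra. }
  split; [unfold ConwaySA; nra |].
  split; [unfold ConwaySA; nra |].
  split.
  - apply Rdiv_lt_0_compat; [apply sqrt_lt_R0 |]; lra.
  - rewrite ConwayS_sq by lra.
    rewrite (ConwaySA_swap b a b); ring.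
Qed.

Section IsoscelesTriangle.

Variables A B C : point.
Hypothesis iso : edist C A = edist A B.

Let a := edist B C.
Let b := edist A B.
Let SA := ConwaySA a b b.
Let SB := ConwaySA b b a.
Let S := ConwayS a b b.

Lemma X15_isosceles :
  X15 A B C = bary A B C (2 * SB * (sqrt 3 * SA + S))
    ((SA + SB) * (sqrt 3 * SB + S)) ((SA + SB) * (sqrt 3 * SB + S)).
Proof.
  unfold X15; rewrite iso; fold a b SA SB S.
  rewrite (ConwaySA_swap b a b); fold SB.
  f_equal; unfold SA, SB, ConwaySA; field.
Qed.

Lemma X17_isosceles : 0 < SA + sqrt 3 * S -> 0 < SB + sqrt 3 * S ->
  X17 A B C = bary A B C (SB + sqrt 3 * S) (SA + sqrt 3 * S) (SA + sqrt 3 * S).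
Proof.
  intros HA HB.
  unfold X17; rewrite iso; fold a b SA SB S.
  rewrite (ConwaySA_swap b a b); fold SB.
  unfold bary; f_equal; field; split; lra.
Qed.

End IsoscelesTriangle.

Lemma sqrt3_pos : 0 < sqrt 3.
Proof. apply sqrt_lt_R0; lra. Qed.

Section IsoscelesWeights.

Variables x y S : R.
Hypotheses (y_pos : 0 < y) (y_lt_x : y < x) (S_pos : 0 < S)
  (S_sq : S ^ 2 = y * (2 * x + y)).

Lemma X15_apex_weight_lt_base : 2 * y * (sqrt 3 * x + S) < (x + y) * (sqrt 3 * y + S).
Proof.
  assert (HS : sqrt 3 * y < S).
  { assert (Hsq : (sqrt 3 * y) ^ 2 < S ^ 2).
    { rewrite Rpow_mult_distr, pow2_sqrt, S_sq by lra; nra. }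
    pose proof sqrt3_pos; nra. }
  apply Rlt_0_minus.
  replace (_ - _) with ((x - y) * (S - sqrt 3 * y)) by ring.
  apply Rmult_lt_0_compat; lra.
Qed.

Lemma X15_X17_weights_cross :
  (y + sqrt 3 * S) * ((x + y) * (sqrt 3 * y + S)) <
  2 * y * (sqrt 3 * x + S) * (x + sqrt 3 * S).
Proof.
  apply Rlt_0_minus.
  replace (_ - _) with
    ((x - y) * (sqrt 3 * (y * (2 * x + y) - S ^ 2) + (1 + sqrt 3 ^ 2) * y * S))
    by ring.
  rewrite S_sq, pow2_sqrt by lra.
  replace (_ * _) with (4 * (x - y) * y * S) by ring.
  repeat apply Rmult_lt_0_compat; lra.
Qed.

Lemma apex_distances_X2_X15_X17 (A B C : point) : noncollinear A B C ->
  let u15 := 2 * y * (sqrt 3 * x + S) in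
  let v15 := (x + y) * (sqrt 3 * y + S) in
  edist A (bary A B C 1 1 1) < edist A (bary A B C u15 v15 v15) /\
  edist A (bary A B C u15 v15 v15) <
  edist A (bary A B C (y + sqrt 3 * S) (x + sqrt 3 * S) (x + sqrt 3 * S)).
Proof.
  intros Hnc u15 v15.
  pose proof sqrt3_pos.
  assert (0 < sqrt 3 * S) by (apply Rmult_lt_0_compat; lra).
  assert (0 < u15) by (unfold u15; assert (0 < sqrt 3 * x) by nra; nra).
  assert (0 < v15) by (unfold v15; assert (0 < sqrt 3 * y) by nra; nra).
  split; apply edist_apex_bary_lt; try assumption; try lra.
  - rewrite Rmult_1_l, Rmult_1_r; apply X15_apex_weight_lt_base.
  - apply X15_X17_weights_cross.
Qed.

End IsoscelesWeights.

Theorem theorem3p2 (A B C : point) :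
  noncollinear A B C ->
  edist C A = edist A B ->
  edist C A > edist B C ->
  edist A (X2 A B C) < edist A (X15 A B C) /\
  edist A (X15 A B C) < edist A (X17 A B C).
Proof.
  intros Hnc Hiso Hba; rewrite Hiso in Hba.
  pose proof (edist_pos (noncollinear_B_neq_C Hnc)) as Ha.
  destruct (isosceles_conway_symbols Ha Hba) as (Hy & Hyx & HS & HS2).
  pose proof sqrt3_pos as Hr.
  unfold X2; rewrite (X15_isosceles A B C Hiso), (X17_isosceles A B C Hiso) by nra.
  exact (apex_distances_X2_X15_X17 Hy Hyx HS HS2 Hnc).
Qed.
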